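(* Let $G=(V,E)$ be a connected undirected graph, where $E$ is a set of unordered pairs of distinct vertices. Consider the following two linear programs. (LR), with variables $d_{ij}$ for $i,j\in V$: $$\min_{d}\ \sum_{(i,j)\in E} d_{ij}\quad\text{s.t.}\quad \sum_{i\in V}\sum_{j\in V} d_{ij}\ge 1,\qquad d_{ij}\le d_{ik}+d_{kj}\ \ \forall\, i,j,k\in V\text{ distinct},$$ $$d_{ij}=d_{ji}\ge 0\ \ \forall i,j\in V,\qquad d_{ii}=0\ \ \forall i\in V.$$ (LR\_OL), with variables $b_{ij}$ for $i,j\in V$: $$\min_{b}\ \sum_{(i,j)\in E} b_{ij}\quad\text{s.t.}\quad \sum_{i\in V}\sum_{j\in V} b_{ij}\ge 1,\qquad b_{ij}\le b_{ik}+b_{kj}\ \ \forall\, i,j,k\in V\text{ distinct with }(i,k)\in E,$$ $$b_{ij}=b_{ji}\ge 0\ \ \forall i,j\in V,\qquad b_{ii}=0\ \ \forall i\in V.$$ Let $d^*$ be an optimal solution of (LR) with optimal value $z_{d^*}=\sum_{(i,j)\in E} d^*_{ij}$, and let $b^*$ be an optimal solution of (LR\_OL) with optimal value $z_{b^*}=\sum_{(i,j)\in E} b^*_{ij}$. Then $z_{b^*}=z_{d^*}$. Moreover, from any optimal solution $b^*$ of (LR\_OL) one can construct a feasible solution $d'$ of (LR) (namely $d'_{ij}$ = the shortest-path distance from $i$ to $j$ in $G$ with edge weights $w_{uv}=b^*_{uv}$ for $(u,v)\in E$) such that $d'_{ij}\ge b^*_{ij}$ for all $i,j\in V$ and $d'_{ij}=b^*_{ij}$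 for all $(i,j)\in E$; in particular $d'$ is optimal for (LR).
   Context: In the sums over $(i,j)\in E$, each edge of $E$ is counted via the corresponding variable $d_{ij}$ (resp. $b_{ij}$), these variables being symmetric. A path from $i$ to $j$ in $G$ is a sequence of vertices $i=v_0,\dots,v_m=j$ with $(v_r,v_{r+1})\in E$; its weight is the sum of the edge weights along it. *)

From HB Require Import structures.
From mathcomp Require Import all_boot all_order all_algebra.
Set Implicit Arguments. Unset Strict Implicit. Unset Printing Implicit Defensive.
Import Order.TTheory GRing.Theory Num.Theory.
Local Open Scope ring_scope.

Section Defs.
Variables (R : realFieldType) (V : finType).

Definition simple_graph (E : rel V) : Prop :=
  (forall i j, E i j = E j i) /\ (forall i, ~~ E i i).

Definition connected_graph (E : rel V) : Prop :=
  forall i j, connect E i j.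

(* Objective: sum over the edges (unordered pairs), each counted once.
   Summing over ordered pairs counts every edge twice, hence the 1/2. *)
Definition objective (E : rel V) (x : V -> V -> R) : R :=
  2^-1 * \sum_(i : V) \sum_(j : V | E i j) x i j.

Definition common_constraints (x : V -> V -> R) : Prop :=
  [/\ 1 <= \sum_(i : V) \sum_(j : V) x i j,
      (forall i j, x i j = x j i),
      (forall i j, 0 <= x i j) &
      (forall i, x i i = 0)].

Definition feasible_LR (d : V -> V -> R) : Prop :=
  common_constraints d /\
  (forall i j k, i != j -> j != k -> i != k -> d i j <= d i k + d k j).

Definition feasible_LR_OL (E : rel V) (b : V -> V -> R) : Prop :=
  common_constraints b /\
  (forall i j k, i != j -> j != k -> i != k -> E i k ->
     b i j <= b i k + b k j).

Definition optimal_LR (E : rel V) (d : V -> V -> R) : Prop :=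
  feasible_LR d /\ forall d', feasible_LR d' -> objective E d <= objective E d'.

Definition optimal_LR_OL (E : rel V) (b : V -> V -> R) : Prop :=
  feasible_LR_OL E b /\
  forall b', feasible_LR_OL E b' -> objective E b <= objective E b'.

(* Weight of the walk i = v_0, v_1, ..., v_m with p = [:: v_1; ...; v_m]. *)
Definition walk_weight (w : V -> V -> R) (i : V) (p : seq V) : R :=
  \sum_(e <- zip (i :: p) p) w e.1 e.2.

Definition is_path (E : rel V) (i j : V) (p : seq V) : Prop :=
  path E i p /\ last i p = j.

Definition is_shortest_path_dist (E : rel V) (w : V -> V -> R) (i j : V)
    (delta : R) : Prop :=
  (exists p, is_path E i j p /\ walk_weight w i p = delta) /\
  (forall p, is_path E i j p -> delta <= walk_weight w i p).

End Defs.

(* The shortest-path metric d' of the weights b* is feasible for (LR).  Since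
   every triangle inequality used by (LR_OL) splits off an edge (i, k), b*_ij
   is at most the weight of any path from i to j; hence d' >= b*, which gives
   the sum constraint, and d' = b* on the edges, so z_d' = z_b*.  As (LR) is
   the more constrained program, z_b* <= z_d* <= z_d' = z_b*. *)

From HB Require Import structures.
From mathcomp Require Import all_boot all_order all_algebra.
Import Order.TTheory GRing.Theory Num.Theory.
Set Implicit Arguments. Unset Strict Implicit. Unset Printing Implicit Defensive.
Local Open Scope ring_scope.

Lemma last_rev_belast (T : Type) (x : T) (s : seq T) :
  last (last x s) (rev (belast x s)) = x.
Proof.
have : rev (x :: s) = last x s :: rev (belast x s) by rewrite lastI rev_rcons.
by rewrite rev_cons => /(congr1 (last x)); rewrite /= last_rcons.
Qed.

Lemma uniq_cons_size_lt_card (T : finType) (x : T) (s : seq T) :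
  uniq (x :: s) -> (size s < #|T|)%N.
Proof. by move=> us; have := max_card (mem (x :: s)); rewrite (card_uniqP us). Qed.

Section WalkWeight.
Variables (R : realFieldType) (V : finType).
Implicit Types (w : V -> V -> R) (i : V) (p q : seq V).

Lemma walk_weight_nil w i : walk_weight w i [::] = 0.
Proof. by rewrite /walk_weight big_nil. Qed.

Lemma walk_weight_cons w i x p :
  walk_weight w i (x :: p) = w i x + walk_weight w x p.
Proof. by rewrite /walk_weight big_cons. Qed.

Lemma walk_weight_cat w i p q :
  walk_weight w i (p ++ q) = walk_weight w i p + walk_weight w (last i p) q.
Proof.
elim: p i => [|x p IHp] i; first by rewrite walk_weight_nil add0r.
by rewrite cat_cons !walk_weight_cons IHp addrA.
Qed.

Lemma walk_weight_ge0 w i p :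
  (forall a b, 0 <= w a b) -> 0 <= walk_weight w i p.
Proof.
move=> w_ge0; elim: p i => [|x p IHp] i; first by rewrite walk_weight_nil.
by rewrite walk_weight_cons addr_ge0.
Qed.

Lemma walk_weight_rev w i p : (forall a b, w a b = w b a) ->
  walk_weight w (last i p) (rev (belast i p)) = walk_weight w i p.
Proof.
move=> w_sym; elim: p i => [|x p IHp] i //=.
rewrite rev_cons -cats1 walk_weight_cat IHp last_rev_belast.
by rewrite !walk_weight_cons walk_weight_nil addr0 addrC w_sym.
Qed.

End WalkWeight.

Section Shortening.
Variables (R : realFieldType) (V : finType) (E : rel V) (w : V -> V -> R).
Hypothesis w_ge0 : forall a b, 0 <= w a b.

Lemma path_shorten i p : path E i p ->
  exists q, [/\ path E i q, last i q = last i p, uniq (i :: q)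
              & walk_weight w i q <= walk_weight w i p].
Proof.
elim: p i => [|x p IHp] i; first by exists [::].
rewrite /= => /andP[Eix /IHp[q [Eq lastq uq le_q]]].
have le_xq : walk_weight w i (x :: q) <= walk_weight w i (x :: p).
  by rewrite !walk_weight_cons lerD2l.
have Exq : path E i (x :: q) by rewrite /= Eix.
have {}lastq : last i (x :: q) = last i (x :: p) by [].
have [iq|iNq] := boolP (i \in x :: q); last first.
  by exists (x :: q); split; rewrite //= iNq.
case/splitPr: iq Exq lastq uq le_xq => a c.
rewrite cat_path last_cat /= cat_uniq => /and3P[_ _ Ec] lastc /and3P[_ _ uc].
rewrite walk_weight_cat walk_weight_cons => le_ac.
exists c; split => //; apply: le_trans le_ac.
by rewrite addrA lerDr addr_ge0 ?walk_weight_ge0.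
Qed.

End Shortening.

Section ShortestPathDist.
Variables (R : realFieldType) (V : finType) (E : rel V) (w : V -> V -> R).
Implicit Types (i j k : V) (d : R).
Local Notation spd := (is_shortest_path_dist E w).

Lemma shortest_path_dist_exists :
  connected_graph E -> (forall a b, 0 <= w a b) ->
  forall i j, exists d, spd i j d.
Proof.
move=> connE w_ge0 i j.
(* Shortened paths have fewer than #|V| vertices, so a lightest path can be
   sought among the finitely many bounded sequences. *)
pose P := [pred s : #|V|.-bseq V | path E i s && (last i s == j)].
have shorten p : is_path E i j p ->
    exists2 s, P s & walk_weight w i s <= walk_weight w i p.
  case=> Ep lastp; have [q [Eq lastq /uniq_cons_size_lt_card/ltnW sq le_q]] :=
    path_shorten w_ge0 Ep.
  by exists (Bseq sq); rewrite //= Eq lastq lastp eqxx.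
have [p Ep lastp] := connectP (connE i j).
have [s0 Ps0 _] := shorten p (conj Ep (esym lastp)).
have [m /andP[Em /eqP lastm] min_m] :=
  extremumP (fun s : #|V|.-bseq V => walk_weight w i s)
    (@le_refl _ R) (@le_trans _ R) (@le_total _ R) Ps0.
exists (walk_weight w i m); split; first by exists m.
move=> q /shorten[s Ps le_s]; exact: le_trans (min_m _ Ps) le_s.
Qed.

Lemma shortest_path_dist_unique i j d1 d2 : spd i j d1 -> spd i j d2 -> d1 = d2.
Proof.
move=> [[p1 [Pp1 <-]] min1] [[p2 [Pp2 <-]] min2].
by apply/le_anti; rewrite min1 ?min2.
Qed.

Lemma shortest_path_dist_le_edge i j d : E i j -> spd i j d -> d <= w i j.
Proof.
move=> Eij [_ min_d]; have := min_d [:: j].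
by rewrite walk_weight_cons walk_weight_nil addr0 /is_path /= Eij; apply.
Qed.

Lemma shortest_path_dist_self i d : (forall a b, 0 <= w a b) -> spd i i d -> d = 0.
Proof.
move=> w_ge0 [[p [_ <-]] min_d]; apply/le_anti.
rewrite walk_weight_ge0 // andbT -(walk_weight_nil w i); exact: min_d.
Qed.

Lemma shortest_path_dist_triangle i j k d dik dkj :
  spd i k dik -> spd k j dkj -> spd i j d -> d <= dik + dkj.
Proof.
move=> [[p [[Ep lastp] <-]] _] [[q [[Eq lastq] <-]] _] [_ min_d].
rewrite -lastp -walk_weight_cat; apply: min_d.
by split; [rewrite cat_path Ep lastp | rewrite last_cat lastp].
Qed.

Section Symmetric.
Hypotheses (E_sym : forall a b, E a b = E b a) (w_sym : forall a b, w a b = w b a).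

Lemma is_path_rev i j p : is_path E i j p -> is_path E j i (rev (belast i p)).
Proof.
case=> Ep <-; split; last exact: last_rev_belast.
by rewrite rev_path; apply: sub_path Ep => a b; rewrite E_sym.
Qed.

Lemma shortest_path_dist_sym i j d : spd i j d -> spd j i d.
Proof.
move=> [[p [Pp <-]] min_d]; split.
  exists (rev (belast i p)); split; first exact: is_path_rev.
  by case: Pp => _ <-; rewrite walk_weight_rev.
move=> q Pq; have Pq_rev := is_path_rev Pq; case: Pq => _ lastq.
by rewrite -(walk_weight_rev j q w_sym) lastq; apply: min_d.
Qed.

End Symmetric.
End ShortestPathDist.

Section Relaxations.
Variables (R : realFieldType) (V : finType) (E : rel V).
Implicit Types (x y d : V -> V -> R).

Lemma eq_objective x y :
  (forall i j, E i j -> x i j = y i j) -> objective E x = objective E y.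
Proof.
move=> eq_xy; rewrite /objective; congr (_ * _).
by apply: eq_bigr => i _; apply: eq_bigr => j; apply: eq_xy.
Qed.

Lemma feasible_LR_OL_of_LR d : feasible_LR d -> feasible_LR_OL E d.
Proof. by case=> cd tri_d; split=> // i j k *; apply: tri_d. Qed.

Section FeasibleOL.
Variable b : V -> V -> R.
Hypotheses (E_irr : forall i, ~~ E i i) (b_feas : feasible_LR_OL E b).

(* Peeling off the first edge (i, x) of the walk is exactly an instance of the
   restricted triangle inequality b i j <= b i x + b x j, as E i x holds. *)
Lemma feasible_LR_OL_le_walk_weight i p :
  path E i p -> b i (last i p) <= walk_weight b i p.
Proof.
case: b_feas => [[_ _ b_ge0 b_diag] tri_b].
elim: p i => [|x p IHp] i /=; first by rewrite b_diag walk_weight_nil.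
case/andP=> Eix /IHp le_xp; rewrite walk_weight_cons.
apply: le_trans (lerD (lexx (b i x)) le_xp); set j := last x p.
have [<-|ij] := eqVneq i j; first by rewrite b_diag addr_ge0.
have [<-|xj] := eqVneq x j; first by rewrite b_diag addr0.
have ix : i != x by apply: contraTneq Eix => ->; apply: E_irr.
by apply: tri_b; rewrite // eq_sym.
Qed.

Lemma feasible_LR_OL_le_shortest_path_dist i j delta :
  is_shortest_path_dist E b i j delta -> b i j <= delta.
Proof.
by case=> [[p [[Ep <-] <-]] _]; apply: feasible_LR_OL_le_walk_weight.
Qed.

Lemma shortest_path_dist_feasible_LR (D : V -> V -> R) :
  (forall i j, E i j = E j i) ->
  (forall i j, is_shortest_path_dist E b i j (D i j)) -> feasible_LR D.
Proof.
move=> E_sym spdD; have [[b_sum b_sym b_ge0 _] _] := b_feas.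
have b_le_D i j : b i j <= D i j.
  exact: feasible_LR_OL_le_shortest_path_dist (spdD i j).
split; last first.
  by move=> i j k *; apply: shortest_path_dist_triangle (spdD i k) (spdD k j) (spdD i j).
split.
- apply: le_trans b_sum _.
  by apply: ler_sum => i _; apply: ler_sum => j _.
- move=> i j; apply: shortest_path_dist_unique (spdD i j) _.
  exact: shortest_path_dist_sym E_sym b_sym _ _ _ (spdD j i).
- by move=> i j; apply: le_trans (b_le_D i j).
- by move=> i; apply: shortest_path_dist_self (spdD i i).
Qed.

End FeasibleOL.
End Relaxations.

Theorem mainTheorem1 (R : realFieldType) (V : finType) (E : rel V)
    (hG : simple_graph E) (hconn : connected_graph E)
    (dstar bstar : V -> V -> R)
    (hd : optimal_LR E dstar) (hb : optimal_LR_OL E bstar) :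
  objective E bstar = objective E dstar /\
  exists d' : V -> V -> R,
    [/\ (forall i j, is_shortest_path_dist E bstar i j (d' i j)),
        feasible_LR d',
        (forall i j, bstar i j <= d' i j),
        (forall i j, E i j -> d' i j = bstar i j) &
        optimal_LR E d'].
Proof.
have [E_sym E_irr] := hG.
have [[d_feas d_min] [b_feas b_min]] := (hd, hb).
have [[_ _ b_ge0 _] _] := b_feas.
have /fin_all_exists[D spdD] :
    forall i, exists Di, forall j, is_shortest_path_dist E bstar i j (Di j).
  by move=> i; apply: fin_all_exists (shortest_path_dist_exists hconn b_ge0 i).
have b_le_D i j : bstar i j <= D i j.
  exact: feasible_LR_OL_le_shortest_path_dist E_irr b_feas _ _ _ (spdD i j).
have D_edge i j : E i j -> D i j = bstar i j.
  by move=> Eij; apply/le_anti; rewrite b_le_D (shortest_path_dist_le_edge Eij).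
have D_feas : feasible_LR D := shortest_path_dist_feasible_LR E_irr b_feas E_sym spdD.
have obj_D : objective E D = objective E bstar := eq_objective D_edge.
have b_le_d : objective E bstar <= objective E dstar.
  by apply: b_min; apply: feasible_LR_OL_of_LR.
have d_le_D : objective E dstar <= objective E D by apply: d_min.
split; first by apply/le_anti; rewrite b_le_d -obj_D.
exists D; split=> //; split=> // d' d'_feas.
by rewrite obj_D; apply: b_min; apply: feasible_LR_OL_of_LR.
Qed.
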